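(* Let $\sigma : X^* \to M$ be a monoid choice of generators for a right cancellative monoid $M$. Then the loop automaton of $M$ with respect to $\sigma$ is the minimal automaton of the loop problem $L_\sigma(M)$.
   Context: Maps are written on the right. $X^*$ is the free monoid on $X$; a choice of generators is a surjective monoid morphism. Let $\overline{X} = \{\overline{x} : x \in X\}$ be new symbols, $\hat{X} = X \cup \overline{X}$. The loop automaton of $M$ w.r.t. $\sigma$ is the automaton over $\hat{X}$ with state set $M$, for each $a \in M$, $x \in X$ an edge $a \to a(x\sigma)$ labelled $x$ and an edge $a(x\sigma) \to a$ labelled $\overline{x}$, with start state and unique terminal state the identity of $M$; the loop problem $L_\sigma(M)$ is the language it accepts. An automaton (possibly infinite) is deterministic if edges are labelled by single letters and each state has at most one outgoing edge with each letter; trim if every state is reachable from the start state and can reach a terminal state. The cone of a state is the set of words labelling paths from it to a terminal state. The minimal automaton of a language $L$ is the unique (up to label-, start- and terminal-preserving isomorphism) deterministic trim automaton accepting $L$ in which no two distinct states have the same cone. *)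

From Stdlib Require Import List.
Import ListNotations.
Set Implicit Arguments.

(* Alphabet hat X = X + overline X : [inl x] is the letter x, [inr x] is xbar. *)
Definition hat (X : Type) : Type := (X + X)%type.

Record automaton (A : Type) := Automaton {
  state : Type;
  start : state;
  terminal : state -> Prop;
  edge : state -> A -> state -> Prop
}.

Inductive path (A : Type) (aut : automaton A) : state aut -> list A -> state aut -> Prop :=
| path_nil : forall p, path aut p [] p
| path_cons : forall p a q w r,
    edge aut p a q -> path aut q w r -> path aut p (a :: w) r.

Definition cone (A : Type) (aut : automaton A) (p : state aut) (w : list A) : Prop :=
  exists r, path aut p w r /\ terminal aut r.

Definition accepted (A : Type) (aut : automaton A) (w : list A) : Prop :=
  cone aut (start aut) w.

Definition deterministic (A : Type) (aut : automaton A) : Prop :=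
  forall p a q1 q2, edge aut p a q1 -> edge aut p a q2 -> q1 = q2.

Definition trim (A : Type) (aut : automaton A) : Prop :=
  forall q : state aut,
    (exists w, path aut (start aut) w q) /\ (exists w, cone aut q w).

(* [aut] is (a representative of) the minimal automaton of [L]:
   deterministic, trim, accepts L, and distinct states have distinct cones. *)
Definition is_minimal_automaton (A : Type) (aut : automaton A) (L : list A -> Prop) : Prop :=
  deterministic aut /\ trim aut /\ (forall w, accepted aut w <-> L w) /\
  (forall p q : state aut, (forall w, cone aut p w <-> cone aut q w) -> p = q).

(* Loop automaton of the monoid (M, mul, one) w.r.t. sigma : X^* -> M
   (maps written on the right: a(x sigma) = mul a (sigma [x])). *)
Definition loop_automaton (X M : Type) (mul : M -> M -> M) (one : M)
    (sigma : list X -> M) : automaton (hat X) :=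
  {| state := M;
     start := one;
     terminal := fun a => a = one;
     edge := fun a l b =>
       match l with
       | inl x => b = mul a (sigma [x])
       | inr x => a = mul b (sigma [x])
       end |}.

Definition loop_problem (X M : Type) (mul : M -> M -> M) (one : M)
    (sigma : list X -> M) : list (hat X) -> Prop :=
  accepted (loop_automaton mul one sigma).

(* Reading a word w of letters forwards from a leads to a(w sigma), and reading
   the barred letters of w in reverse order leads from a(w sigma) back to a; in
   particular every state is reachable and co-reachable.  Moreover the barred
   word of w (reversed) leads from a to the terminal state 1 exactly when
   a = w sigma, so the cone of a state determines it.  Determinism on barred
   letters is right cancellativity. *)

From Stdlib Require Import List.
Import ListNotations.

Section LoopAutomaton.

Variables (X M : Type) (mul : M -> M -> M) (one : M).
Hypothesis mulA : forall a b c, mul a (mul b c) = mul (mul a b) c.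
Hypothesis mul1m : forall a, mul one a = a.
Hypothesis mulm1 : forall a, mul a one = a.
Hypothesis right_cancel : forall a b c, mul b a = mul c a -> b = c.
Variable sigma : list X -> M.
Hypothesis sigma_nil : sigma [] = one.
Hypothesis sigma_app : forall u v, sigma (u ++ v) = mul (sigma u) (sigma v).
Hypothesis sigma_surj : forall a : M, exists w, sigma w = a.

Notation aut := (loop_automaton mul one sigma).

Lemma sigma_cons (x : X) (w : list X) : sigma (x :: w) = mul (sigma [x]) (sigma w).
Proof. exact (sigma_app [x] w). Qed.

Lemma sigma_rev_cons (x : X) (w : list X) :
  sigma (rev (x :: w)) = mul (sigma (rev w)) (sigma [x]).
Proof. simpl; apply sigma_app. Qed.

Lemma path_map_inl (w : list X) (a : M) : path aut a (map inl w) (mul a (sigma w)).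
Proof.
  induction w as [|x w IH] in a |- *; simpl.
  - rewrite sigma_nil, mulm1; constructor.
  - apply path_cons with (q := mul a (sigma [x])); [reflexivity|].
    rewrite (sigma_cons x w), mulA; apply IH.
Qed.

Lemma path_map_inr (w : list X) (a : M) :
  path aut (mul a (sigma (rev w))) (map inr w) a.
Proof.
  induction w as [|x w IH] in a |- *; simpl.
  - rewrite sigma_nil, mulm1; constructor.
  - apply path_cons with (q := mul a (sigma (rev w))); [|apply IH].
    simpl; rewrite sigma_app, mulA; reflexivity.
Qed.

Lemma path_map_inrE (w : list X) (a b : M) :
  path aut a (map inr w) b -> a = mul b (sigma (rev w)).
Proof.
  induction w as [|x w IH] in a |- *; intros Hpath.
  - inversion Hpath; simpl; rewrite sigma_nil, mulm1; reflexivity.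
  - inversion Hpath as [|? ? c ? ? Hedge Hrest]; simpl in Hedge.
    rewrite Hedge, (IH c Hrest), sigma_rev_cons, mulA; reflexivity.
Qed.

Lemma cone_map_inr (w : list X) (a : M) :
  cone aut a (map inr w) <-> a = sigma (rev w).
Proof.
  split.
  - intros [r [Hpath Hterm]]; simpl in Hterm; rewrite Hterm in Hpath.
    apply path_map_inrE in Hpath; rewrite Hpath, mul1m; reflexivity.
  - intros ->; exists one; split; [|reflexivity].
    rewrite <- (mul1m (sigma (rev w))); apply path_map_inr.
Qed.

Lemma sigma_rev_surj (a : M) : exists w, sigma (rev w) = a.
Proof.
  destruct (sigma_surj a) as [w Hw]; exists (rev w); rewrite rev_involutive; exact Hw.
Qed.

Lemma loop_automaton_deterministic : deterministic aut.
Proof.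
  intros a [x|x] b c Hb Hc; simpl in Hb, Hc.
  - congruence.
  - apply (right_cancel (sigma [x])); congruence.
Qed.

Lemma loop_automaton_trim : trim aut.
Proof.
  intros a; destruct (sigma_rev_surj a) as [w Hw]; split.
  - exists (map inl (rev w)); simpl.
    rewrite <- Hw, <- (mul1m (sigma (rev w))); apply path_map_inl.
  - exists (map inr w); apply cone_map_inr; symmetry; exact Hw.
Qed.

Lemma loop_automaton_cone_inj (a b : M) :
  (forall u, cone aut a u <-> cone aut b u) -> a = b.
Proof.
  intros Hcone; destruct (sigma_rev_surj a) as [w Hw].
  assert (Hb : cone aut b (map inr w)).
  { apply Hcone, cone_map_inr; symmetry; exact Hw. }
  apply cone_map_inr in Hb; congruence.
Qed.

End LoopAutomaton.

Theorem proposition7p1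
  (X M : Type) (mul : M -> M -> M) (one : M)
  (mulA : forall a b c, mul a (mul b c) = mul (mul a b) c)
  (mul1m : forall a, mul one a = a)
  (mulm1 : forall a, mul a one = a)
  (right_cancel : forall a b c, mul b a = mul c a -> b = c)
  (sigma : list X -> M)
  (sigma_nil : sigma [] = one)
  (sigma_app : forall u v, sigma (u ++ v) = mul (sigma u) (sigma v))
  (sigma_surj : forall a : M, exists w, sigma w = a) :
  is_minimal_automaton (loop_automaton mul one sigma) (loop_problem mul one sigma).
Proof.
  split; [|split; [|split]].
  - apply loop_automaton_deterministic; assumption.
  - apply loop_automaton_trim; assumption.
  - intros w; reflexivity.
  - apply loop_automaton_cone_inj; assumption.
Qed.
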